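(* Let $G=(V,E)$ be a connected undirected graph on $n$ nodes with Laplacian $L$, let $\kappa_1,\dots,\kappa_n>0$, $D_\kappa=\mathrm{diag}(\kappa_1,\dots,\kappa_n)$, and for $S\subseteq V$ let $Q_S=L+D_\kappa D_S$, where $D_S$ is the diagonal $0/1$ matrix with $(D_S)_{ii}=1$ iff $i\in S$ (write $Q_v$ for $Q_{\{v\}}$). For nonempty $S$ let $H(S)=\frac12\mathrm{tr}(Q_S^{-1})$. Let $k\ge1$ be an integer, let $\hat H=\min\{H(S): S\subseteq V,\ S\neq\emptyset,\ |S|\le k\}$, and let $B=\max_{v\in V}\mathrm{tr}(Q_v^{-1})$. Let $S_s$ be the output of the following Swap Algorithm: start from an arbitrary set $S\subseteq V$ with $|S|=k$; while there exist $i\in S$ and $j\in V\setminus S$ with $\mathrm{tr}(Q_{(S\cup\{j\})\setminus\{i\}}^{-1})<\mathrm{tr}(Q_S^{-1})$, replace $S$ by $(S\cup\{j\})\setminus\{i\}$; when no such pair exists, return $S$. Then $$H(S_s)\le\left(1-\frac{k-1}{2k-1}\right)\hat H+B\,\frac{k-1}{2k-1}.$$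
   Context: For nonempty $S$, $Q_S$ is positive definite. $H(S)$ is the total steady-state variance of the leader–follower consensus dynamics $\dot x=-(L+D_\kappa D_S)x+w$ with white noise $w$, where $S$ is the set of leaders; the $k$-leader selection problem asks to minimize $H(S)$ subject to $|S|\le k$. *)

From HB Require Import structures.
From mathcomp Require Import all_boot all_order all_algebra.
From mathcomp Require Import fingraph.
From mathcomp Require Import reals.
Set Implicit Arguments. Unset Strict Implicit. Unset Printing Implicit Defensive.
Import Order.TTheory GRing.Theory Num.Theory.
Local Open Scope ring_scope.

Definition simple_graph (n : nat) (e : rel 'I_n) : Prop :=
  symmetric e /\ irreflexive e.

Definition connected_graph (n : nat) (e : rel 'I_n) : Prop :=
  forall i j : 'I_n, connect e i j.

Definition laplacian (R : ringType) (n : nat) (e : rel 'I_n) : 'M[R]_n :=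
  \matrix_(i, j) (if i == j then (#|[set l | e i l]|)%:R else - (e i j)%:R).

Definition QS (R : ringType) (n : nat) (e : rel 'I_n) (kappa : 'I_n -> R)
    (S : {set 'I_n}) : 'M[R]_n :=
  laplacian R e + diag_mx (\row_i (kappa i * (i \in S)%:R)).

Definition Hcost (R : fieldType) (n : nat) (e : rel 'I_n) (kappa : 'I_n -> R)
    (S : {set 'I_n}) : R :=
  2^-1 * \tr (invmx (QS e kappa S)).

(* Terminal condition of the Swap Algorithm: no improving swap exists. *)
Definition swap_optimal (R : realFieldType) (n : nat) (e : rel 'I_n)
    (kappa : 'I_n -> R) (S : {set 'I_n}) : Prop :=
  forall i j : 'I_n, i \in S -> j \notin S ->
    ~~ (\tr (invmx (QS e kappa ((j |: S) :\ i))) < \tr (invmx (QS e kappa S))).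

(* Write f S = tr (Q_S^-1).  Connectivity gives a discrete minimum principle
   for Q_S when S is nonempty, so Q_S is invertible with an entrywise
   nonnegative inverse.  Since Q_S is modular in S with nonnegative increments,
   the resolvent identity A^-1 - B^-1 = A^-1 (B - A) B^-1 shows that f is
   nonincreasing on nonempty sets and supermodular on pairs with nonempty
   intersection.  If S is swap-stable with |S| = k >= 2 and s is in S,
   supermodularity applied to S and (S + j) - s bounds the loss
   f S - f (S + j) by f (S - s) - f S, hence by B - f S; by diminishing returns
   f S - f T <= |T| (B - f S) for the optimal T, which rearranges into the
   bound.  For k = 1 swap-stability alone gives f S <= f T. *)

From HB Require Import structures.
From mathcomp Require Import all_boot all_order all_algebra.
From mathcomp Require Import reals.
From mathcomp Require Import ring lra zify.
Set Implicit Arguments. Unset Strict Implicit. Unset Printing Implicit Defensive.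
Import Order.TTheory GRing.Theory Num.Theory.
Local Open Scope ring_scope.

Local Notation nnegmx := (mxOver Num.nneg).

Lemma mxtrace_ge0 (R : numDomainType) n (A : 'M[R]_n) :
  A \is a nnegmx -> 0 <= \tr A.
Proof. by move=> /mxOverP A_ge0; apply: sumr_ge0 => i _; rewrite -nnegrE. Qed.

Lemma nnegmxD (R : numDomainType) m n (A B : 'M[R]_(m, n)) :
  A \is a nnegmx -> B \is a nnegmx -> A + B \is a nnegmx.
Proof.
by move=> /mxOverP A_ge0 /mxOverP B_ge0; apply/mxOverP => i j; rewrite mxE rpredD.
Qed.

Section InverseNonnegative.
Variables (R : numFieldType) (n : nat).
Implicit Types A B M X Y Z : 'M[R]_n.

Lemma invmxB A B : A \in unitmx -> B \in unitmx ->
  invmx A - invmx B = invmx A *m (B - A) *m invmx B.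
Proof. by move=> uA uB; rewrite mulmxBr mulVmx // mulmxBl mulmxK // mul1mx. Qed.

Lemma invmx_antitone A B : A \in unitmx -> B \in unitmx ->
  invmx A \is a nnegmx -> invmx B \is a nnegmx -> B - A \is a nnegmx ->
  invmx A - invmx B \is a nnegmx.
Proof. by move=> uA uB *; rewrite invmxB // !mxOverM. Qed.

(* Expanding each difference of inverses twice by the resolvent identity
   writes the second difference as a sum of products of nonnegative factors. *)
Lemma invmx_supermodular M X Y Z :
  M \in unitmx -> X \in unitmx -> Y \in unitmx -> Z \in unitmx ->
  invmx M \is a nnegmx -> invmx X \is a nnegmx -> invmx Y \is a nnegmx ->
  invmx Z \is a nnegmx -> X - M \is a nnegmx -> Y - M \is a nnegmx ->
  X + Y = M + Z ->
  (invmx M - invmx X) - (invmx Y - invmx Z) \is a nnegmx.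
Proof.
move=> uM uX uY uZ iM iX iY iZ XM YM XYMZ.
have ZY : Z - Y = X - M.
  by apply/eqP; rewrite subr_eq addrAC XYMZ [M + Z]addrC addrK.
have ZX : Z - X = Y - M.
  by apply/eqP; rewrite subr_eq addrAC [Y + X]addrC XYMZ [M + Z]addrC addrK.
have e1 := invmxB uM uX; have e2 := invmxB uY uZ; rewrite ZY in e2.
have e3 := invmxB uM uY; have e4 := invmxB uX uZ; rewrite ZX in e4.
have -> : (invmx M - invmx X) - (invmx Y - invmx Z) =
    invmx M *m (Y - M) *m invmx Y *m (X - M) *m invmx X +
    invmx Y *m (X - M) *m (invmx X *m (Y - M) *m invmx Z).
  by rewrite e1 e2 -e3 -e4 !mulmxBl !mulmxBr addrA subrK.
by rewrite nnegmxD // !mxOverM.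
Qed.
End InverseNonnegative.

Section LeaderLaplacian.
Variables (R : realFieldType) (n : nat) (e : rel 'I_n) (kappa : 'I_n -> R).
Hypothesis kappa_gt0 : forall i, 0 < kappa i.
Local Notation Q := (QS e kappa).
Implicit Types A S X Y : {set 'I_n}.

Lemma QS_subset_nneg A (A' : {set 'I_n}) :
  A \subset A' -> Q A' - Q A \is a nnegmx.
Proof.
move=> AA'; apply/mxOverP => i j; rewrite nnegrE !mxE.
case: eqP => [_|_]; last by rewrite !mulr0n subrr.
rewrite !mulr1n subr_ge0 lerD2l ler_pM2l // ler_nat.
by case: (boolP (i \in A)) => [/(subsetP AA') ->|_]; rewrite ?leq_b1.
Qed.

Lemma QS_setU_setI X Y : Q (X :|: Y) + Q (X :&: Y) = Q X + Q Y.
Proof.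
apply/matrixP => i j; rewrite !mxE !inE.
by case: (i == j); case: (i \in X); case: (i \in Y);
  rewrite /= ?mulr1n ?mulr0n; ring.
Qed.

Hypothesis e_irr : irreflexive e.

Lemma QS_mulmx_col S (x : 'cV[R]_n) i :
  (Q S *m x) i 0 =
    \sum_j (e i j)%:R * (x i 0 - x j 0) + kappa i * (i \in S)%:R * x i 0.
Proof.
rewrite mulmxDl mul_diag_mx !mxE; congr (_ + _).
have deg_sum : #|[set l | e i l]|%:R = \sum_j (e i j)%:R :> R.
  rewrite -sumr_const big_mkcond; apply: eq_bigr => j _.
  by rewrite inE; case: (e i j).
under [RHS]eq_bigr => j _ do rewrite mulrBr.
rewrite sumrB -mulr_suml -deg_sum (bigD1 i) //= mxE eqxx.
rewrite [X in _ = _ - X](bigD1 i) //= e_irr mul0r add0r -sumrN.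
by congr (_ + _); apply: eq_bigr => j ji; rewrite mxE eq_sym (negbTE ji) mulNr.
Qed.

Lemma QS_min_neighbours S (x : 'cV[R]_n) a :
  (forall b, x a 0 <= x b 0) -> x a 0 < 0 -> 0 <= (Q S *m x) a 0 ->
  (forall b, e a b -> x b 0 = x a 0) /\ a \notin S.
Proof.
move=> a_min xa_lt0; rewrite QS_mulmx_col.
set F := fun b => (e a b)%:R * (x b 0 - x a 0).
have F_ge0 b : true -> 0 <= F b by move=> _; rewrite mulr_ge0 ?ler0n ?subr_ge0.
have leader_le0 : kappa a * (a \in S)%:R * x a 0 <= 0.
  by rewrite nmulr_lle0 // mulr_ge0 ?ler0n // ltW.
have -> : \sum_j (e a j)%:R * (x a 0 - x j 0) = - \sum_j F j.
  by rewrite -sumrN; apply: eq_bigr => j _; rewrite /F -mulrN opprB.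
move=> Qxa_ge0; have sumF_ge0 : 0 <= \sum_j F j by apply: sumr_ge0.
have sumF0 : \sum_j F j = 0 by lra.
split=> [b eab|].
  have /eqP := psumr_eq0P F_ge0 sumF0 (i := b) isT.
  by rewrite /F eab mul1r subr_eq0 => /eqP.
apply/negP => aS; have : kappa a * x a 0 < 0 by rewrite pmulr_rlt0.
by rewrite aS mulr1 in leader_le0 Qxa_ge0; lra.
Qed.

Hypothesis e_conn : connected_graph e.

Lemma QS_minimum_principle S (x : 'cV[R]_n) : S != set0 ->
  (forall i, 0 <= (Q S *m x) i 0) -> forall i, 0 <= x i 0.
Proof.
move=> S0 Qx_ge0 i0; rewrite leNgt; apply/negP => xi0_lt0.
have [m _ m_min] := @arg_minP _ _ _ i0 predT (fun j => x j 0) isT.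
have xm_lt0 : x m 0 < 0 by apply: le_lt_trans (m_min i0 isT) xi0_lt0.
have minimal a : x a 0 = x m 0 ->
    (forall b, e a b -> x b 0 = x m 0) /\ a \notin S.
  move=> xa; rewrite -xa; apply: QS_min_neighbours => [b||]; rewrite ?xa //.
  exact: m_min.
have minimal_path p a : x a 0 = x m 0 -> path e a p -> x (last a p) 0 = x m 0.
  elim: p a => [|b p IHp] a xa //= /andP[eab pth].
  exact: IHp ((minimal a xa).1 b eab) pth.
have [s sS] := set0Pn _ S0; have /connectP [p pth s_last] := e_conn m s.
have /minimal [_] : x s 0 = x m 0 by rewrite s_last; apply: minimal_path.
by rewrite sS.
Qed.

Lemma QS_unitmx S : S != set0 -> Q S \in unitmx.
Proof.
move=> S0; rewrite -unitmx_tr -row_free_unit; apply: inj_row_free => v vQ0.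
have Qv0 : Q S *m v^T = 0 by rewrite -[LHS]trmxK trmx_mul trmxK vQ0 trmx0.
have v_ge0 : forall j, 0 <= v^T j 0.
  by apply: (QS_minimum_principle S0) => i; rewrite Qv0 mxE.
have v_le0 : forall j, 0 <= (- v^T) j 0.
  by apply: (QS_minimum_principle S0) => i; rewrite mulmxN Qv0 oppr0 mxE.
by apply/rowP => j; have := v_ge0 j; have := v_le0 j; rewrite !mxE; lra.
Qed.

Lemma invmx_QS_nneg S : S != set0 -> invmx (Q S) \is a nnegmx.
Proof.
move=> S0; apply/mxOverP => i j; rewrite nnegrE.
have := QS_minimum_principle S0 (x := col j (invmx (Q S))).
rewrite colE mulmxA mulmxV ?QS_unitmx // mul1mx -colE => /(_ _ i).
by rewrite mxE; apply=> l; rewrite mxE ler0n.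
Qed.

Definition trinvQ S := \tr (invmx (Q S)).

Lemma trinvQ_ge0 S : S != set0 -> 0 <= trinvQ S.
Proof. by move=> S0; apply/mxtrace_ge0/invmx_QS_nneg. Qed.

Lemma trinvQ_antitone A (A' : {set 'I_n}) :
  A != set0 -> A \subset A' -> trinvQ A' <= trinvQ A.
Proof.
move=> A0 AA'; have A'0 : A' != set0.
  by apply: contraNneq A0 => A'_eq0; rewrite -subset0 -A'_eq0.
rewrite -subr_ge0 /trinvQ -raddfB; apply/mxtrace_ge0/invmx_antitone;
  by rewrite ?QS_unitmx ?invmx_QS_nneg ?QS_subset_nneg.
Qed.

Lemma trinvQ_supermodular X Y : X :&: Y != set0 ->
  trinvQ X + trinvQ Y <= trinvQ (X :&: Y) + trinvQ (X :|: Y).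
Proof.
move=> XY0; have sup0 A : X :&: Y \subset A -> A != set0.
  by move=> sXY; apply: contraNneq XY0 => A0; rewrite -subset0 -A0.
have X0 := sup0 _ (subsetIl X Y); have Y0 := sup0 _ (subsetIr X Y).
have Z0 := sup0 _ (subset_trans (subsetIl X Y) (subsetUl X Y)).
have := @invmx_supermodular _ _ (Q (X :&: Y)) (Q X) (Q Y) (Q (X :|: Y)).
rewrite !QS_unitmx ?invmx_QS_nneg ?QS_subset_nneg ?subsetIl ?subsetIr //.
move=> /(_ isT isT isT isT isT isT isT isT isT isT).
rewrite -QS_setU_setI addrC => /(_ erefl) /mxtrace_ge0.
by rewrite !raddfB /= /trinvQ; lra.
Qed.

End LeaderLaplacian.

Section SwapStable.
Variables (R : realFieldType) (T : finType) (f : {set T} -> R).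
Implicit Types A S U X Y : {set T}.

Definition swap_stable S :=
  forall i j, i \in S -> j \notin S -> f S <= f ((j |: S) :\ i).

Lemma swap_stable1 s t : swap_stable [set s] -> f [set s] <= f [set t].
Proof.
move=> stable; have [-> //|ts] := eqVneq t s.
suff <- : (t |: [set s]) :\ s = [set t] by apply: stable; rewrite inE ?eqxx.
apply/setP => x; rewrite !inE; case: (eqVneq x s) => [->|] /=.
  by rewrite eq_sym (negbTE ts).
by rewrite orbF.
Qed.

Hypothesis f_antitone : forall A A', A != set0 -> A \subset A' -> f A' <= f A.
Hypothesis f_supermodular :
  forall X Y, X :&: Y != set0 -> f X + f Y <= f (X :&: Y) + f (X :|: Y).

Lemma f_le_of_set1 A v B : v \in A -> f [set v] <= B -> f A <= B.
Proof.
move=> vA; have v0 : [set v] != set0 by apply/set0Pn; exists v; rewrite set11.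
by apply: le_trans (f_antitone v0 _); rewrite sub1set.
Qed.

Lemma f_loss_setU S U : S != set0 ->
  f S - f (S :|: U) <= \sum_(j in U) (f S - f (j |: S)).
Proof.
move=> S0; move: {2}#|U| (erefl #|U|) => m; elim: m U => [|m IHm] U cardU.
  by move/eqP: cardU; rewrite cards_eq0 => /eqP ->; rewrite setU0 big_set0 subrr.
have [j jU] : exists j, j \in U by apply/set0Pn; rewrite -card_gt0 cardU.
rewrite (big_setD1 j jU) /=.
have {IHm} := IHm (U :\ j); rewrite (cardsD1 j U) jU in cardU.
move=> /(_ (succn_inj cardU)).
set X := S :|: U :\ j.
have SX : S \subset X :&: (j |: S) by rewrite subsetI subsetUl subsetUr.
have XS0 : X :&: (j |: S) != set0.
  by apply: contraNneq S0 => XS_eq0; rewrite -subset0 -XS_eq0.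
have := f_supermodular XS0; have := f_antitone S0 SX.
have -> : X :|: (j |: S) = S :|: U.
  apply/setP => z; rewrite !inE; case: (eqVneq z j) => [->|_] /=.
    by rewrite jU !orbT.
  by case: (z \in S); case: (z \in U).
lra.
Qed.

Lemma swap_stable_loss S s j : swap_stable S -> s \in S -> S :\ s != set0 ->
  f S - f (j |: S) <= f (S :\ s) - f S.
Proof.
move=> stable sS Ss0; have S_le := f_antitone Ss0 (subD1set S s).
have [jS|jNS] := boolP (j \in S).
  by rewrite (setUidPr _) ?sub1set // subrr subr_ge0.
have := stable _ _ sS jNS; have := @f_supermodular S ((j |: S) :\ s).
have -> : S :&: ((j |: S) :\ s) = S :\ s.
  by rewrite setIDA (setIidPl _) ?subsetUr.
have -> : S :|: ((j |: S) :\ s) = j |: S.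
  apply/setP => z; rewrite !inE; case: (eqVneq z s) => [->|_] /=.
    by rewrite sS orbT.
  by case: (z \in S); rewrite ?orbT ?orbF.
move=> /(_ Ss0); lra.
Qed.

Lemma swap_stable_bound S s U : swap_stable S -> s \in S -> S :\ s != set0 ->
  U != set0 -> f S - f U <= #|U|%:R * (f (S :\ s) - f S).
Proof.
move=> stable sS Ss0 U0.
have S0 : S != set0 by apply/set0Pn; exists s.
have := f_loss_setU U S0; have := f_antitone U0 (subsetUr S U).
have : \sum_(j in U) (f S - f (j |: S)) <= #|U|%:R * (f (S :\ s) - f S).
  rewrite mulr_natl -sumr_const; apply: ler_sum => j _.
  exact: swap_stable_loss.
lra.
Qed.

Lemma swap_stable_approx k S U B : (0 < k)%N -> #|S| = k -> (#|U| <= k)%N ->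
  U != set0 -> 0 <= f U -> (forall v, f [set v] <= B) -> swap_stable S ->
  (2 * k - 1)%:R * f S <= k%:R * f U + 2 * (k.-1)%:R * B.
Proof.
case: k => [//|[|k]] _ cardS cardU U0 fU_ge0 B_max stable.
  have /cards1P [s S_eq] : #|S| == 1%N by rewrite cardS.
  have /cards1P [u U_eq] : #|U| == 1%N by rewrite eqn_leq cardU card_gt0.
  rewrite S_eq U_eq in stable *; rewrite /= mulr0n mulr0 mul0r addr0 !mul1r.
  exact: swap_stable1.
have [s sS] : exists s, s \in S by apply/set0Pn; rewrite -card_gt0 cardS.
have Ss0 : S :\ s != set0.
  by rewrite -card_gt0; move: cardS; rewrite (cardsD1 s) sS add1n => -[->].
have [v vSs] := set0Pn _ Ss0.
have fSs_le := f_le_of_set1 vSs (B_max v).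
have fS_le := f_le_of_set1 sS (B_max s).
have S_le := f_antitone Ss0 (subD1set S s).
have loss_le := swap_stable_bound stable sS Ss0 U0.
have loss_le_B : #|U|%:R * (f (S :\ s) - f S) <= k.+2%:R * (B - f S).
  by rewrite ler_pM ?ler0n ?subr_ge0 ?ler_nat ?lerD2r.
have -> : (2 * k.+2 - 1)%:R = 2 * k%:R + 3 :> R.
  by rewrite (_ : 2 * k.+2 - 1 = 2 * k + 3)%N ?natrD; [ring | lia].
rewrite /= -[k.+2]addn2 -[k.+1]addn1 !natrD in loss_le_B *.
have : 0 <= k%:R * (B - f S) by rewrite mulr_ge0 ?subr_ge0.
have : 0 <= (k%:R + 1) * f U by rewrite mulr_ge0 ?addr_ge0.
lra.
Qed.
End SwapStable.

Theorem theorem4 (R : realType) (n : nat) (e : rel 'I_n)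
    (kappa : 'I_n -> R) (k : nat) (Hhat B : R) (Ss : {set 'I_n}) :
  simple_graph e ->
  connected_graph e ->
  (forall i, 0 < kappa i) ->
  (1 <= k)%N ->
  (* Hhat = min { H(S) : S nonempty, |S| <= k } *)
  (exists S : {set 'I_n}, [/\ S != set0, (#|S| <= k)%N & Hhat = Hcost e kappa S]) ->
  (forall S : {set 'I_n}, S != set0 -> (#|S| <= k)%N -> Hhat <= Hcost e kappa S) ->
  (* B = max_v tr(Q_v^{-1}) *)
  (exists v : 'I_n, B = \tr (invmx (QS e kappa [set v]))) ->
  (forall v : 'I_n, \tr (invmx (QS e kappa [set v])) <= B) ->
  (* Ss is an output of the Swap Algorithm: |Ss| = k and no improving swap *)
  #|Ss| = k ->
  swap_optimal e kappa Ss ->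
  Hcost e kappa Ss <=
    (1 - (k.-1)%:R / (2 * k - 1)%:R) * Hhat + B * ((k.-1)%:R / (2 * k - 1)%:R).
Proof.
move=> [_ e_irr] e_conn kappa_gt0 k_gt0 [T [T0 Tk ->]] _ _ B_max Ss_k Ss_opt.
have stable : swap_stable (trinvQ e kappa) Ss.
  by move=> i j iSs jSs; rewrite leNgt; apply: Ss_opt.
have := swap_stable_approx (trinvQ_antitone kappa_gt0 e_irr e_conn)
  (trinvQ_supermodular kappa_gt0 e_irr e_conn) k_gt0 Ss_k Tk T0
  (trinvQ_ge0 kappa_gt0 e_irr e_conn T0) B_max stable.
rewrite /Hcost -/(trinvQ e kappa Ss) -/(trinvQ e kappa T).
case: k k_gt0 {Tk Ss_k} => [//|k] _.
rewrite succnK (_ : 2 * k.+1 - 1 = 2 * k + 1)%N; last by lia.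
rewrite natrD natrM -addn1 natrD.
set x := trinvQ e kappa Ss; set y := trinvQ e kappa T; set K := k%:R => approx.
have K_ge0 : 0 <= K by [].
rewrite -subr_ge0.
have -> : (1 - K / (2 * K + 1)) * (2^-1 * y) + B * (K / (2 * K + 1)) - 2^-1 * x =
    ((K + 1) * y + 2 * K * B - (2 * K + 1) * x) / (2 * (2 * K + 1)).
  by field; lra.
by rewrite divr_ge0 ?subr_ge0 //; lra.
Qed.
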